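(* Let $a>b\geq1$ be coprime integers, $p=a/b$, $\hat n\geq 1$ an integer, $N=(2^b+2)\hat n+2^{a-b}+2^b$. Define $g_0=\mathbf{1}_{(2^b+1)\hat n}\circ\mathbf{0}_{\hat n}\circ\mathbf{0}_{2^{a-b}}\circ\mathbf{1}_{2^b}$ and, for $i\in[2^{a-b}]$, $g_i=\mathbf{0}_{(2^b+2)\hat n}\circ\mathbf{0}_{i-1}\circ 1\circ\mathbf{0}_{2^{a-b}+2^b-i}$, all of length $N$. Then for every $s^*\in\{0,1\}^N$, $\sum_{i=0}^{2^{a-b}} d(s^*,g_i)^p\geq(2^a+2^{a-b})(\hat n+1)^p$.
   Context: $d$ denotes Hamming distance; $\mathbf{0}_\ell,\mathbf{1}_\ell$ are the all-zero/all-one strings of length $\ell$; $\circ$ is concatenation; $[t]=\{1,\dots,t\}$. *)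

From Stdlib Require Import Reals Lra Lia Arith List.
Open Scope R_scope.

Fixpoint hamming (s t : list bool) : nat :=
  match s, t with
  | x :: s', y :: t' => ((if Bool.eqb x y then 0 else 1) + hamming s' t')%nat
  | _, _ => 0%nat
  end.

(* x^y for x >= 0, with the convention 0^y = 0 (y > 0 here). *)
Definition rpow (x y : R) : R :=
  if Req_EM_T x 0 then 0 else Rpower x y.

Definition zeros (l : nat) : list bool := repeat false l.
Definition ones (l : nat) : list bool := repeat true l.

Definition gstr (a b nh i : nat) : list bool :=
  match i with
  | O => ones ((2 ^ b + 1) * nh) ++ zeros nh ++ zeros (2 ^ (a - b)) ++ ones (2 ^ b)
  | S _ => zeros ((2 ^ b + 2) * nh) ++ zeros (i - 1) ++ (true :: nil)
           ++ zeros (2 ^ (a - b) + 2 ^ b - i)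
  end.

(* Only the coordinates where g_0 and g_i differ matter: by the triangle
   inequality d(s,g_0) + d(s,g_i) >= d(g_0,g_i) = (2^b+1)(n+1).  Bound
   d(s,g_0)^p by the tangent of x^p at 2^b(n+1) and each d(s,g_i)^p by the
   tangent at n+1. *)

From Stdlib Require Import Reals Lra Lia Arith List.
Open Scope R_scope.

Lemma Rpower_ge_tangent (p y x : R) : 1 <= p -> 0 < y -> 0 < x ->
  Rpower x p - p * Rpower y (p - 1) * x >= Rpower y p - p * Rpower y (p - 1) * y.
Proof.
  intros hp hy hx.
  (* phi is decreasing below y and increasing above y, since phi' c has the sign of c - y *)
  set (phi := fun z => Rpower z p - p * Rpower y (p - 1) * z).
  set (phi' := fun z => p * Rpower z (p - 1) - p * Rpower y (p - 1)).
  assert (phi_deriv : forall c, 0 < c -> derivable_pt_lim phi c (phi' c)).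
  { intros c hc. apply derivable_pt_lim_minus.
    - now apply derivable_pt_lim_power.
    - replace (p * Rpower y (p - 1)) with (p * Rpower y (p - 1) * 1) at 2 by ring.
      apply derivable_pt_lim_scal, derivable_pt_lim_id. }
  change (phi x >= phi y).
  destruct (Rtotal_order x y) as [lt | [-> | gt]].
  - destruct (MVT_cor2 phi phi' x y lt) as [c [E hc]].
    { intros c hc. apply phi_deriv. lra. }
    assert (Rpower c (p - 1) <= Rpower y (p - 1)) by (apply Rle_Rpower_l; lra).
    assert (phi' c <= 0) by (unfold phi'; nra).
    nra.
  - lra.
  - destruct (MVT_cor2 phi phi' y x gt) as [c [E hc]].
    { intros c hc. apply phi_deriv. lra. }
    assert (Rpower y (p - 1) <= Rpower c (p - 1)) by (apply Rle_Rpower_l; lra).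
    assert (0 <= phi' c) by (unfold phi'; nra).
    nra.
Qed.

Lemma rpow_pos (x p : R) : 0 < x -> rpow x p = Rpower x p.
Proof. intros hx. unfold rpow. destruct (Req_EM_T x 0); [lra | reflexivity]. Qed.

Lemma rpow_ge_tangent (p y x : R) : 1 <= p -> 0 < y -> 0 <= x ->
  rpow x p >= Rpower y p + p * Rpower y (p - 1) * (x - y).
Proof.
  intros hp hy hx.
  assert (Rpower y p = Rpower y (p - 1) * y) as Hyp.
  { replace p with ((p - 1) + 1) at 1 by ring. now rewrite Rpower_plus, Rpower_1. }
  assert (0 < Rpower y (p - 1)) by apply exp_pos.
  destruct (Req_EM_T x 0) as [-> | nz].
  - unfold rpow. destruct (Req_EM_T 0 0); [|lra]. rewrite Hyp.
    assert (0 <= (p - 1) * (Rpower y (p - 1) * y)) by (apply Rmult_le_pos; nra). nra.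
  - rewrite rpow_pos by lra.
    pose proof (Rpower_ge_tangent p y x hp hy ltac:(lra)). lra.
Qed.

Lemma Rpower_pow2_div (k b : nat) : (0 < b)%nat ->
  Rpower (2 ^ b) (INR k / INR b) = 2 ^ k.
Proof.
  intros hb. assert (0 < INR b) by (apply lt_0_INR; lia).
  rewrite <- Rpower_pow, Rpower_mult by lra.
  replace (INR b * (INR k / INR b)) with (INR k) by (field; lra).
  apply Rpower_pow; lra.
Qed.

Lemma sum_f_R0_ge_first_plus (F : nat -> R) (c : R) (N : nat) :
  (forall i, (1 <= i <= N)%nat -> F i >= c) -> sum_f_R0 F N >= F 0%nat + INR N * c.
Proof.
  induction N as [|N IH]; intros HF; [simpl; lra|]. rewrite tech5.
  assert (F (S N) >= c) by (apply HF; lia).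
  assert (sum_f_R0 F N >= F 0%nat + INR N * c) by (apply IH; intros; apply HF; lia).
  rewrite S_INR. lra.
Qed.

(* The continuous core of the argument, for weights k = 2^b and m = 2^(a-b). *)
Lemma rpow_sum_ge (p k y : R) (m : nat) (d : nat -> R) :
  1 <= p -> 0 < k -> 0 < y -> INR m = Rpower k (p - 1) ->
  (forall i, 0 <= d i) ->
  (forall i, (1 <= i <= m)%nat -> d 0%nat + d i >= (k + 1) * y) ->
  sum_f_R0 (fun i => rpow (d i) p) m >= (Rpower k p + INR m) * Rpower y p.
Proof.
  intros hp hk hy hm hd hsum.
  set (slope := p * Rpower y (p - 1)).
  assert (0 <= slope) by (apply Rmult_le_pos; [lra | left; apply exp_pos]).
  assert (first : rpow (d 0%nat) p
            >= Rpower k p * Rpower y p + INR m * slope * (d 0%nat - k * y)).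
  { pose proof (rpow_ge_tangent p (k * y) (d 0%nat) hp ltac:(nra) (hd 0%nat)) as T.
    rewrite <- !Rpower_mult_distr in T by lra.
    rewrite hm. unfold slope. lra. }
  assert (others : forall i, (1 <= i <= m)%nat ->
            rpow (d i) p >= Rpower y p + slope * (k * y - d 0%nat)).
  { intros i hi.
    pose proof (rpow_ge_tangent p y (d i) hp hy (hd i)) as T.
    specialize (hsum i hi).
    assert (slope * (k * y - d 0%nat) <= slope * (d i - y)) by (apply Rmult_le_compat_l; lra).
    fold slope in T. lra. }
  pose proof (sum_f_R0_ge_first_plus (fun i => rpow (d i) p) _ m others) as S.
  simpl in S. nra.
Qed.

Lemma hamming_sym (s t : list bool) : hamming s t = hamming t s.
Proof.
  revert t; induction s as [|x s IH]; intros [|y t]; simpl; auto.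
  rewrite IH. now destruct x, y.
Qed.

Lemma hamming_triangle (s t u : list bool) : length s = length t -> length t = length u ->
  (hamming s u <= hamming s t + hamming t u)%nat.
Proof.
  revert t u; induction s as [|x s IH]; intros [|y t] [|z u]; simpl; intros H1 H2; try lia.
  specialize (IH t u ltac:(lia) ltac:(lia)). destruct x, y, z; simpl; lia.
Qed.

Lemma hamming_app (s1 s2 t1 t2 : list bool) : length s1 = length t1 ->
  hamming (s1 ++ s2) (t1 ++ t2) = (hamming s1 t1 + hamming s2 t2)%nat.
Proof.
  revert t1; induction s1 as [|x s1 IH]; intros [|y t1]; simpl; intros H; try lia.
  rewrite IH; lia.
Qed.

Lemma hamming_repeat (x y : bool) (l : nat) :
  hamming (repeat x l) (repeat y l) = if Bool.eqb x y then 0%nat else l.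
Proof. induction l; simpl; [now destruct (Bool.eqb x y)|]. rewrite IHl. now destruct x, y. Qed.

Lemma length_gstr (a b nh i : nat) : (i <= 2 ^ (a - b))%nat ->
  length (gstr a b nh i) = ((2 ^ b + 2) * nh + 2 ^ (a - b) + 2 ^ b)%nat.
Proof.
  intros. destruct i; unfold gstr, ones, zeros; rewrite !length_app; simpl;
    rewrite ?length_app, !repeat_length; simpl; try rewrite repeat_length; lia.
Qed.

Lemma hamming_gstr0_gstr (a b nh i : nat) : (1 <= i <= 2 ^ (a - b))%nat ->
  hamming (gstr a b nh 0) (gstr a b nh i) = ((2 ^ b + 1) * (nh + 1))%nat.
Proof.
  intros hi. destruct i as [|i]; [lia|]. unfold gstr, ones, zeros.
  (* align both strings on the blocks 1^((2^b+1)n) 0^n 0^i 0 0^(2^(a-b)-i-1) 1^(2^b) *)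
  replace ((2 ^ b + 2) * nh)%nat with ((2 ^ b + 1) * nh + nh)%nat by lia.
  replace (S i - 1)%nat with i by lia.
  replace (2 ^ (a - b) + 2 ^ b - S i)%nat with ((2 ^ (a - b) - S i) + 2 ^ b)%nat by lia.
  replace (2 ^ (a - b))%nat with (i + 1 + (2 ^ (a - b) - S i))%nat at 1 by lia.
  rewrite !repeat_app, <- !app_assoc.
  repeat (rewrite hamming_app by (rewrite !repeat_length; reflexivity)).
  rewrite !hamming_repeat. simpl. lia.
Qed.

Theorem claim2 (a b nh : nat) (hab : (b < a)%nat) (hb : (1 <= b)%nat)
  (hcop : Nat.gcd a b = 1%nat) (hn : (1 <= nh)%nat)
  (s : list bool)
  (hs : length s = ((2 ^ b + 2) * nh + 2 ^ (a - b) + 2 ^ b)%nat) :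
  let p := INR a / INR b in
  sum_f_R0 (fun i => rpow (INR (hamming s (gstr a b nh i))) p) (2 ^ (a - b))
    >= (2 ^ a + 2 ^ (a - b)) * rpow (INR nh + 1) p.
Proof.
  intros p.
  assert (0 < INR b) by (apply lt_0_INR; lia).
  assert (INR b < INR a) by (apply lt_INR; lia).
  assert (hp : 1 <= p) by (apply (Rmult_le_reg_r (INR b)); unfold p; field_simplify; lra).
  assert (Hpm1 : p - 1 = INR (a - b) / INR b) by (unfold p; rewrite minus_INR by lia; field; lra).
  assert (0 < INR nh + 1) by (pose proof (pos_INR nh); lra).
  rewrite rpow_pos by lra.
  rewrite <- (Rpower_pow2_div a b) by lia.
  replace (2 ^ (a - b)) with (INR (2 ^ (a - b))) by (rewrite pow_INR; simpl; f_equal; ring).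
  apply rpow_sum_ge; auto using pos_INR.
  - apply pow_lt; lra.
  - rewrite Hpm1, Rpower_pow2_div, pow_INR by lia. simpl. f_equal; ring.
  - intros i hi.
    assert (hamming s (gstr a b nh 0) + hamming s (gstr a b nh i)
              >= (2 ^ b + 1) * (nh + 1))%nat as Hd.
    { rewrite <- (hamming_gstr0_gstr a b nh i hi), (hamming_sym s).
      apply hamming_triangle; rewrite ?length_gstr; lia. }
    apply le_INR in Hd. rewrite plus_INR, mult_INR, !plus_INR, pow_INR in Hd.
    replace (INR 2) with 2 in Hd by (simpl; ring). simpl (INR 1) in Hd. lra.
Qed.
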